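(* Let $\mathbf a=(a_0,a_1,\dots)\in\mathbb{R}^{\mathbb{N}}$. The linear centrality $f^{\mathbf a}$ satisfies the density axiom if and only if $a_k> k(a_2-a_1)+(2a_1-a_2)$ for all integers $k\ge 3$.
   Context: Graphs are finite directed graphs; $d_G(x,y)$ is the shortest directed path length from $x$ to $y$ ($\infty$ if none). For $\mathbf a\in\mathbb{R}^{\mathbb{N}}$ the linear centrality is $f^{\mathbf a}_G(i)=\sum_{k\ge 0}|\{j: d_G(j,i)=k\}|\,a_k$ (only finite distances counted). For positive integers $k,p$: a $k$-clique is a set of $k$ nodes with arcs in both directions between every pair of distinct nodes; a directed $p$-cycle is a set of $p$ nodes $z_0,\dots,z_{p-1}$ with arcs $z_j\to z_{j+1 \bmod p}$. Let $x$ be a node of the $k$-clique and $y$ a node of the $p$-cycle; $S_{xy}$ is the disjoint union of the $k$-clique and the directed $p$-cycle together with the two arcs $x\to y$ and $y\to x$. A centrality $f$ satisfies the density axiom if for every $k\ge 3$, taking $p=k$, one has $f_{S_{xy}}(x)>f_{S_{xy}}(y)$. *)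

From mathcomp Require Import all_boot all_order all_algebra.
Set Implicit Arguments. Unset Strict Implicit. Unset Printing Implicit Defensive.
Import Order.TTheory GRing.Theory Num.Theory.
Local Open Scope ring_scope.

(* A finite directed graph: a relation e on a finType V (e u v = arc u -> v). *)

Fixpoint walk (V : finType) (e : rel V) (n : nat) (u v : V) : bool :=
  match n with
  | 0 => u == v
  | n'.+1 => [exists w, e u w && walk e n' w v]
  end.

Definition is_dist (V : finType) (e : rel V) (u v : V) (k : nat) : bool :=
  walk e k u v && [forall m : 'I_k, ~~ walk e m u v].

(* Linear centrality f^a_G(i) = sum_k |{j : d(j,i) = k}| a_k.  Finite
   distances are < #|V|, so the sum over k < #|V| is the full sum. *)
Definition lin_cent (R : realFieldType) (a : nat -> R) (V : finType)
  (e : rel V) (i : V) : R :=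
  \sum_(k < #|V|) (#|[set j | is_dist e j i k]|)%:R * a k.

(* S_xy : disjoint union of the k-clique (inl) and the directed p-cycle (inr)
   z_0 -> z_1 -> ... -> z_{p-1} -> z_0, plus arcs x -> y and y -> x. *)
Definition S_rel (k p : nat) (x : 'I_k) (y : 'I_p) : rel ('I_k + 'I_p) :=
  fun u v =>
    match u, v with
    | inl a, inl b => a != b
    | inr a, inr b => (val b == (val a).+1 %% p)%N
    | inl a, inr b => (a == x) && (b == y)
    | inr a, inl b => (a == y) && (b == x)
    end.

Definition density_axiom (R : realFieldType) (a : nat -> R) : Prop :=
  forall (k : nat), (3 <= k)%N -> forall (x : 'I_k) (y : 'I_k),
    lin_cent a (S_rel x y) (inr y) < lin_cent a (S_rel x y) (inl x).

From mathcomp Require Import all_boot all_order all_algebra.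
From mathcomp Require Import zify ring.
Set Implicit Arguments.
Unset Strict Implicit.
Unset Printing Implicit Defensive.

Import GRing.Theory Num.Theory.
Local Open Scope ring_scope.

(* In S_xy every node reaches x through the clique or through y, so the
   distances to x are 0 (x), 1 (the other k - 1 clique nodes and y) and
   2, ..., k along the cycle, while the distances to y are 0, ..., k - 1 along
   the cycle, 1 (x) and 2 (the other clique nodes).  Hence
   f(x) = a_0 + (k-1) a_1 + (a_1 + ... + a_k) and
   f(y) = a_1 + (k-1) a_2 + (a_0 + ... + a_(k-1)), and the cycle sums
   telescope to f(x) - f(y) = a_k - (k (a_2 - a_1) + 2 a_1 - a_2).
   The distances are certified by a potential D vanishing at the target,
   dropping by at most one along arcs and by exactly one along some arc out of
   every other node. *)

Section DistancePotential.
Variables (V : finType) (e : rel V) (i : V) (D : V -> nat).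
Hypothesis D_target : D i = 0%N.
Hypothesis D_arc : forall u w, e u w -> (D u <= (D w).+1)%N.
Hypothesis D_descent : forall u, u != i -> exists2 w, e u w & D u = (D w).+1.

Lemma walk_potential_le n u : walk e n u i -> (D u <= n)%N.
Proof.
elim: n u => [|n IHn] u /=; first by move/eqP->; rewrite D_target.
by case/existsP=> w /andP[euw /IHn]; have := D_arc euw; lia.
Qed.

Lemma walk_potential u : walk e (D u) u i.
Proof.
move Du: (D u) => d; elim: d u Du => [|d IHd] u /= Du.
  by case: (eqVneq u i) => // /D_descent[w _]; lia.
case: (eqVneq u i) Du => [-> | /D_descent[w euw ->] [Dw]]; first by rewrite D_target.
by apply/existsP; exists w; rewrite euw IHd.
Qed.

Lemma is_dist_potential u d : is_dist e u i d = (D u == d).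
Proof.
apply/idP/eqP => [/andP[Wd /forallP noW] | <-].
  move: (walk_potential_le Wd); rewrite leq_eqVlt => /orP[/eqP // | lt_Dd].
  by have := noW (Ordinal lt_Dd); rewrite walk_potential.
rewrite /is_dist walk_potential; apply/forallP => m; apply/negP.
by move/walk_potential_le; have := ltn_ord m; lia.
Qed.

Lemma lin_cent_potential (R : realFieldType) (a : nat -> R) :
  (forall u, D u < #|V|)%N -> lin_cent a e i = \sum_u a (D u).
Proof.
move=> D_lt; rewrite /lin_cent (partition_big (fun u => Ordinal (D_lt u)) xpredT) //=.
apply: eq_bigr => d _; rewrite mulr_natl -sumr_const big_mkcond [RHS]big_mkcond.
apply: eq_bigr => u _; rewrite inE is_dist_potential -(inj_eq val_inj) /=.
by case: eqP => // ->.
Qed.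

End DistancePotential.

Section CycleDistance.
Variables (k : nat) (y : 'I_k).

(* The distance from z_c to z_y (in this direction) on the directed k-cycle. *)
Definition cycle_dist (c : nat) : nat :=
  if (c <= y)%N then (y - c)%N else (y + k - c)%N.

Lemma cycle_dist_lt c : (c < k)%N -> (cycle_dist c < k)%N.
Proof. by have y_lt := ltn_ord y; rewrite /cycle_dist; case: (leqP c y); lia. Qed.

Lemma cycle_distK c : (c < k)%N -> cycle_dist (cycle_dist c) = c.
Proof.
by have y_lt := ltn_ord y; rewrite /cycle_dist; case: (leqP c y) => ? ?; case: leqP; lia.
Qed.

Lemma cycle_dist_id : cycle_dist y = 0%N.
Proof. by rewrite /cycle_dist leqnn subnn. Qed.

Lemma cycle_dist_succ c : (c < k)%N -> c != y :>nat ->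
  cycle_dist c = (cycle_dist (c.+1 %% k)).+1.
Proof.
move=> c_lt /eqP c_neq; have y_lt := ltn_ord y; rewrite /cycle_dist.
case: (ltnP c.+1 k) => [c1_lt | c1_ge].
  by rewrite modn_small //; case: (leqP c y) => ?; case: (leqP c.+1 y) => ?; lia.
have -> : c.+1 = k by lia.
by rewrite modnn leq0n; case: leqP; lia.
Qed.

Lemma cycle_dist_succ_le c : (c < k)%N ->
  (cycle_dist c <= (cycle_dist (c.+1 %% k)).+1)%N.
Proof.
move=> c_lt; have [-> | c_neq] := eqVneq c y; first by rewrite cycle_dist_id.
by rewrite -cycle_dist_succ.
Qed.

Lemma sum_cycle_dist (R : realFieldType) (F : nat -> R) :
  \sum_(c < k) F (cycle_dist c) = \sum_(t < k) F t.
Proof.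
pose h (c : 'I_k) : 'I_k := Ordinal (cycle_dist_lt (ltn_ord c)).
have h_inj : injective h by apply: (can_inj (g := h)) => c; apply/val_inj/cycle_distK/ltn_ord.
by rewrite [RHS](reindex_inj h_inj).
Qed.

End CycleDistance.

Section DensityGraph.
Variables (k : nat) (x y : 'I_k).

(* The distance to x (d0 = 0, s = 1) or to y (d0 = 1, s = 0) in S_xy. *)
Definition S_potential (d0 s : nat) (u : 'I_k + 'I_k) : nat :=
  match u with
  | inl b => if b == x then d0 else d0.+1
  | inr c => (s + cycle_dist y c)%N
  end.

Lemma sum_S_potential (R : realFieldType) (a : nat -> R) d0 s :
  \sum_u a (S_potential d0 s u) = a d0 + a d0.+1 *+ k.-1 + \sum_(t < k) a (s + t)%N.
Proof.
rewrite big_sumType /= (sum_cycle_dist y (fun t => a (s + t)%N)); congr (_ + _).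
rewrite (bigD1 x) //= eqxx; congr (_ + _).
rewrite (eq_bigr (fun _ => a d0.+1)); last by move=> b /negbTE ->.
by rewrite sumr_const cardC1 card_ord.
Qed.

Lemma S_potential_lt d0 s u : (d0.+1 < k + k)%N -> (s <= k)%N ->
  (S_potential d0 s u < #|{: 'I_k + 'I_k}|)%N.
Proof.
rewrite card_sum !card_ord; case: u => [b | c] /= d0_lt s_le; first by case: (b == x); lia.
by have := cycle_dist_lt y (ltn_ord c); lia.
Qed.

Lemma S_cycle_descent d0 s (c : 'I_k) : c != y -> exists2 w,
  S_rel x y (inr c) w & S_potential d0 s (inr c) = (S_potential d0 s w).+1.
Proof.
move=> c_neq; have k_gt0 : (0 < k)%N := leq_ltn_trans (leq0n c) (ltn_ord c).
exists (inr (Ordinal (ltn_pmod c.+1 k_gt0))); first by rewrite /= eqxx.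
by rewrite /S_potential -addnS -cycle_dist_succ.
Qed.

Lemma lin_cent_S_clique (R : realFieldType) (a : nat -> R) :
  lin_cent a (S_rel x y) (inl x) = a 0%N + a 1%N *+ k.-1 + \sum_(t < k) a t.+1.
Proof.
rewrite (@lin_cent_potential _ _ _ (S_potential 0 1)) ?sum_S_potential //.
- by rewrite /S_potential eqxx.
- move=> [b | c] [b' | c'] /=; rewrite /S_potential; try by case: (b == x).
    by case/andP=> /eqP -> _; rewrite cycle_dist_id.
  by move/eqP->; apply: cycle_dist_succ_le.
- move=> [b | c] u_neq.
    have b_neq : b != x by apply: contra u_neq => /eqP ->.
    by exists (inl x) => //; rewrite /S_potential (negbTE b_neq) eqxx.
  have [-> | c_neq] := eqVneq c y.
    by exists (inl x); [rewrite /= !eqxx | rewrite /S_potential cycle_dist_id eqxx].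
  exact: S_cycle_descent.
- by move=> u; apply: S_potential_lt; have := ltn_ord x; lia.
Qed.

Lemma lin_cent_S_cycle (R : realFieldType) (a : nat -> R) : (2 <= k)%N ->
  lin_cent a (S_rel x y) (inr y) = a 1%N + a 2%N *+ k.-1 + \sum_(t < k) a t.
Proof.
move=> k_ge2; rewrite (@lin_cent_potential _ _ _ (S_potential 1 0)) ?sum_S_potential //.
- by rewrite /S_potential cycle_dist_id.
- move=> [b | c] [b' | c'] /=; rewrite /S_potential.
  + by case: (b == x); case: (b' == x).
  + by case/andP=> /eqP -> /eqP ->; rewrite eqxx cycle_dist_id.
  + by case/andP=> /eqP -> _; rewrite cycle_dist_id.
  + by move/eqP->; apply: cycle_dist_succ_le.
- move=> [b | c] u_neq.
    have [-> | b_neq] := eqVneq b x.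
      by exists (inr y); [rewrite /= !eqxx | rewrite /S_potential cycle_dist_id eqxx].
    by exists (inl x) => //; rewrite /S_potential (negbTE b_neq) eqxx.
  by apply: S_cycle_descent; apply: contra u_neq => /eqP ->.
- by move=> u; apply: S_potential_lt; lia.
Qed.

Lemma lin_cent_S_gap (R : realFieldType) (a : nat -> R) : (2 <= k)%N ->
  lin_cent a (S_rel x y) (inl x) - lin_cent a (S_rel x y) (inr y) =
  a k - (k%:R * (a 2%N - a 1%N) + (2 * a 1%N - a 2%N)).
Proof.
move=> k_ge2; rewrite lin_cent_S_clique lin_cent_S_cycle //.
have -> : \sum_(t < k) a t.+1 = \sum_(t < k) a t + (a k - a 0%N).
  rewrite -(telescope_sumr _ (leq0n k)) big_mkord sumrB; ring.
have -> : k%:R = k.-1%:R + 1 :> R by rewrite natr1 prednK // ltnW.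
rewrite -[a 1%N *+ _]mulr_natl -[a 2%N *+ _]mulr_natl; ring.
Qed.

End DensityGraph.

Theorem proposition1 (R : realFieldType) (a : nat -> R) :
  density_axiom a <->
  (forall k : nat, (3 <= k)%N ->
     a k > k%:R * (a 2%N - a 1%N) + (2 * a 1%N - a 2%N)).
Proof.
have gapE k (x y : 'I_k) : (3 <= k)%N ->
    (lin_cent a (S_rel x y) (inr y) < lin_cent a (S_rel x y) (inl x)) =
    (k%:R * (a 2%N - a 1%N) + (2 * a 1%N - a 2%N) < a k).
  by move=> k_ge3; rewrite -subr_gt0 lin_cent_S_gap ?subr_gt0 // ltnW.
split=> [density k k_ge3 | gap k k_ge3 x y]; last by rewrite gapE // gap.
have k_gt0 : (0 < k)%N by lia.
by rewrite -(gapE k (Ordinal k_gt0) (Ordinal k_gt0)) //; apply: density.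
Qed.
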